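(* Let $A\in\mathbb{R}^{n\times n}$, $B\in\mathbb{R}^{n\times m}$, $Q\succeq0$, $R\succ0$, with $(A,B)$ stabilizable and $Q=C^TC$ with $(A,C)$ detectable, and let $\Lambda=\mathrm{diag}(Q,R)$. Let $S,H$ be off-policy data matrices with $S\succ0$ (see context). Define $P_0=0$ and, for $k\ge0$, let $P_{k+1}\in\mathbb{S}^{n+m}$ solve $$SP_{k+1}S=S\Lambda S+H\big(P_{k,11}-P_{k,12}P_{k,22}^{-1}P_{k,12}^T\big)H^T,$$ where the Schur-complement term is taken to be $0$ when $k=0$ (so $P_1=\Lambda$). Then $P_k\to P^*$ as $k\to\infty$, where $$P^*=\begin{bmatrix}Q+A^TX^*A & A^TX^*B\\ B^TX^*A & R+B^TX^*B\end{bmatrix}$$ and $X^*$ is the unique positive semidefinite solution of $X=A^TXA-A^TXB(R+B^TXB)^{-1}B^TXA+Q$.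
   Context: Off-policy data: along one trajectory of $x(k+1)=Ax(k)+Bu(k)$ from $x(0)=z$ with arbitrary inputs $u(0),\dots,u(N-1)$, $S=\frac1N\sum_{k=0}^{N-1}[x(k);u(k)][x(k);u(k)]^T$ and $H=\frac1N\sum_{k=0}^{N-1}[x(k);u(k)]x(k+1)^T$. For $P\in\mathbb{S}^{n+m}$, $P_{11}\in\mathbb{R}^{n\times n}$, $P_{12}\in\mathbb{R}^{n\times m}$, $P_{22}\in\mathbb{R}^{m\times m}$ denote the blocks of $P=\begin{bmatrix}P_{11}&P_{12}\\P_{12}^T&P_{22}\end{bmatrix}$. *)

From HB Require Import structures.
From mathcomp Require Import all_boot all_order all_algebra.
From mathcomp Require Import all_classical all_reals all_analysis.
Set Implicit Arguments. Unset Strict Implicit. Unset Printing Implicit Defensive.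
Import Order.TTheory GRing.Theory Num.Theory.
Local Open Scope ring_scope.

Section Defs.
Variable R : realType.

Definition psd (n : nat) (M : 'M[R]_n) : Prop :=
  M^T = M /\ forall v : 'cV[R]_n, 0 <= (v^T *m M *m v) 0 0.

Definition pd (n : nat) (M : 'M[R]_n) : Prop :=
  M^T = M /\ forall v : 'cV[R]_n, v != 0 -> 0 < (v^T *m M *m v) 0 0.

(* Schur stability: every (complex) eigenvalue a + i b of M, with eigenvector
   x + i y <> 0, satisfies |a + i b| < 1.  Complex eigen-equation written
   out over the reals: M (x + i y) = (a + i b)(x + i y). *)
Definition schur_stable (n : nat) (M : 'M[R]_n) : Prop :=
  forall (a b : R) (x y : 'cV[R]_n), (x != 0 \/ y != 0) ->
    M *m x = a *: x - b *: y -> M *m y = b *: x + a *: y ->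
    a ^+ 2 + b ^+ 2 < 1.

Definition stabilizable (n m : nat) (A : 'M[R]_n) (B : 'M[R]_(n, m)) : Prop :=
  exists K : 'M[R]_(m, n), schur_stable (A + B *m K).

Definition detectable (n p : nat) (A : 'M[R]_n) (C : 'M[R]_(p, n)) : Prop :=
  exists L : 'M[R]_(n, p), schur_stable (A + L *m C).

Definition zdat (n m : nat) (x : nat -> 'cV[R]_n) (u : nat -> 'cV[R]_m) (k : nat)
  : 'cV[R]_(n + m) := col_mx (x k) (u k).

Definition Sdata (n m N : nat) (x : nat -> 'cV[R]_n) (u : nat -> 'cV[R]_m)
  : 'M[R]_(n + m) :=
  N%:R^-1 *: \sum_(k < N) (zdat x u k *m (zdat x u k)^T).

Definition Hdata (n m N : nat) (x : nat -> 'cV[R]_n) (u : nat -> 'cV[R]_m)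
  : 'M[R]_(n + m, n) :=
  N%:R^-1 *: \sum_(k < N) (zdat x u k *m (x k.+1)^T).

Definition Lambda (n m : nat) (Q : 'M[R]_n) (Rw : 'M[R]_m) : 'M[R]_(n + m) :=
  block_mx Q 0 0 Rw.

Definition schurP (n m : nat) (P : 'M[R]_(n + m)) : 'M[R]_n :=
  ulsubmx P - ursubmx P *m invmx (drsubmx P) *m (ursubmx P)^T.

Definition schur_term (n m : nat) (P : nat -> 'M[R]_(n + m)) (k : nat) : 'M[R]_n :=
  if k == 0%N then 0 else schurP (P k).

Definition dare (n m : nat) (A : 'M[R]_n) (B : 'M[R]_(n, m)) (Q : 'M[R]_n)
  (Rw : 'M[R]_m) (X : 'M[R]_n) : Prop :=
  X = A^T *m X *m A - A^T *m X *m B *m invmx (Rw + B^T *m X *m B) *m B^T *m X *m A + Q.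

Definition Pstar (n m : nat) (A : 'M[R]_n) (B : 'M[R]_(n, m)) (Q : 'M[R]_n)
  (Rw : 'M[R]_m) (X : 'M[R]_n) : 'M[R]_(n + m) :=
  block_mx (Q + A^T *m X *m A) (A^T *m X *m B)
           (B^T *m X *m A) (Rw + B^T *m X *m B).

End Defs.

(* Because H = S [A B]^T and S is invertible, the data recursion is
   P_(k+1) = Lambda + [A B]^T X_k [A B] with X_0 = 0 and X_(k+1) = Ric(X_k), i.e. value iteration
   for the Riccati operator Ric.  Ric is the pointwise minimum over feedback gains K of the
   closed-loop cost maps, hence monotone for the Loewner order: X_k increases, and it is bounded
   by the cost of a stabilizing gain, so it converges to a psd fixed point X.  Every psd fixed point
   Y dominates all X_k, so X <= Y.  Conversely detectability forces the optimal closed loop of X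
   to be stable, and Y - X can only grow along that closed loop, so Y <= X. *)

From HB Require Import structures.
From mathcomp Require Import all_boot all_order all_algebra.
From mathcomp Require Import all_classical all_reals all_analysis.
From mathcomp Require Import complex.
From mathcomp Require Import ring lra.
Import Order.TTheory GRing.Theory Num.Theory.
Import numFieldNormedType.Exports.
Local Open Scope classical_set_scope.
Local Open Scope ring_scope.

Set Implicit Arguments. Unset Strict Implicit. Unset Printing Implicit Defensive.

Section PerturbedContraction.
Variable R : realType.

Lemma cvgn0P (f : nat -> R) :
  f @ \oo --> 0 <-> forall e, 0 < e -> exists N, forall k, (N <= k)%N -> `|f k| < e.
Proof.
rewrite cvgrPdist_lt; split => H e /H.
- by move=> [N _ HN]; exists N => k /HN; rewrite sub0r normrN.
- by move=> [N HN]; exists N => // k /HN; rewrite sub0r normrN.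
Qed.

Lemma perturbed_contraction_cvg0 (a b : nat -> R) (c : R) :
  (forall k, 0 <= a k) -> 0 <= c -> c < 1 -> b @ \oo --> 0 ->
  (forall k, a k.+1 <= c * a k + b k) -> a @ \oo --> 0.
Proof.
move=> a_ge0 c_ge0 c_lt1 /cvgn0P b0 a_rec; apply/cvgn0P => e e_gt0.
have half_e_gt0 : 0 < e / 2 by rewrite divr_gt0.
have margin_gt0 : 0 < e / 2 * (1 - c) by rewrite mulr_gt0 ?subr_gt0.
have [N bN] := b0 _ margin_gt0.
have a_tail t : a (N + t)%N <= c ^+ t * a N + e / 2.
  elim: t => [|t IH]; first by rewrite addn0 expr0 mul1r lerDl ltW.
  have b_small : b (N + t)%N < e / 2 * (1 - c).
    exact: le_lt_trans (ler_norm _) (bN _ (leq_addr _ _)).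
  have := ler_wpM2l c_ge0 IH; have := a_rec (N + t)%N.
  rewrite addnS exprS -mulrA; nra.
have geo0 : (fun t => c ^+ t * a N) @ \oo --> 0.
  rewrite -(mul0r (a N)); apply: cvgMr_tmp; apply: cvg_expr.
  by rewrite (ger0_norm c_ge0).
have [T geoT] := proj1 (cvgn0P _) geo0 _ half_e_gt0.
exists (N + T)%N => k leNTk; rewrite ger0_norm //.
have leNk : (N <= k)%N := leq_trans (leq_addr T N) leNTk.
rewrite -(subnKC leNk); apply: le_lt_trans (a_tail _) _.
have := geoT (k - N)%N; rewrite leq_subRL // => /(_ leNTk) /(le_lt_trans (ler_norm _)).
lra.
Qed.

End PerturbedContraction.

Section SchurStability.
Variable R : realType.
Local Notation C := R[i].
Local Notation normc := (@Normc.normc R).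
Local Notation cmx := (map_mx (real_complex R)).
Local Notation Re := (@complex.Re R).
Local Notation Im := (@complex.Im R).

Lemma normc_ge0 (z : C) : 0 <= normc z.
Proof. by case: z => a b; rewrite /Normc.normc sqrtr_ge0. Qed.

Lemma normc_real (r : R) : normc r%:C%C = `|r|.
Proof. by rewrite /Normc.normc /= expr0n /= addr0 sqrtr_sqr. Qed.

Lemma affine_rec_normc_cvg0 (s t : nat -> C) (z : C) : normc z < 1 ->
  (fun k => normc (t k)) @ \oo --> 0 -> (forall k, s k.+1 = z * s k + t k) ->
  (fun k => normc (s k)) @ \oo --> 0.
Proof.
move=> z_lt1 t0 s_rec; apply: perturbed_contraction_cvg0 (normc_ge0 z) z_lt1 t0 _.
  by move=> k; apply: normc_ge0.
by move=> k; rewrite s_rec -Normc.normcM; apply: le_normcD.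
Qed.

(* Peel off one factor (M - z) at a time: E M^k.+1 = z (E M^k) + (E (M - z)) M^k. *)
Lemma mul_prod_subr_expr_cvg0 n (M : 'M[C]_n.+1) (rs : seq C) :
  all (fun z => normc z < 1) rs ->
  forall E : 'M[C]_n.+1, E * \prod_(z <- rs) (M - z%:M) = 0 ->
  forall i j, (fun k => normc ((E * M ^+ k) i j)) @ \oo --> 0.
Proof.
elim: rs => [|z rs IH] /= => [_ E|/andP[z_lt1 rs_lt1] E].
  rewrite big_nil mulr1 => -> i j.
  by under eq_fun do rewrite mul0r mxE Normc.normc0; apply: cvg_cst.
rewrite big_cons mulrA => /(IH rs_lt1) EMz0 i j.
apply: affine_rec_normc_cvg0 z_lt1 (EMz0 i j) _ => k.
rewrite exprS mulrA mulrBr mulrBl -mulmxE mul_mx_scalar -scalemxAl !mxE.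
ring.
Qed.

Lemma map_Re_mul_real p q r (v : 'M[C]_(p, q)) (N : 'M[R]_(q, r)) :
  map_mx Re (v *m cmx N) = map_mx Re v *m N.
Proof.
apply/matrixP => i j; rewrite !mxE (@raddf_sum _ _ (Re : Rcomplex R -> R)).
by apply: eq_bigr => k _; rewrite !mxE; case: (v i k) => a b /=; ring.
Qed.

Lemma map_Im_mul_real p q r (v : 'M[C]_(p, q)) (N : 'M[R]_(q, r)) :
  map_mx Im (v *m cmx N) = map_mx Im v *m N.
Proof.
apply/matrixP => i j; rewrite !mxE (@raddf_sum _ _ (Im : Rcomplex R -> R)).
by apply: eq_bigr => k _; rewrite !mxE; case: (v i k) => a b /=; ring.
Qed.

Lemma map_Re_scale p q (z : C) (v : 'M[C]_(p, q)) :
  map_mx Re (z *: v) = Re z *: map_mx Re v - Im z *: map_mx Im v.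
Proof.
by apply/matrixP => i j; rewrite !mxE; case: z (v i j) => a b [c d] /=; ring.
Qed.

Lemma map_Im_scale p q (z : C) (v : 'M[C]_(p, q)) :
  map_mx Im (z *: v) = Im z *: map_mx Re v + Re z *: map_mx Im v.
Proof.
by apply/matrixP => i j; rewrite !mxE; case: z (v i j) => a b [c d] /=; ring.
Qed.

Lemma map_Re_Im_eq0 p q (v : 'M[C]_(p, q)) :
  map_mx Re v = 0 -> map_mx Im v = 0 -> v = 0.
Proof.
move=> /matrixP Re0 /matrixP Im0; apply/matrixP => i j.
by move: (Re0 i j) (Im0 i j); rewrite !mxE; case: (v i j) => a b /= -> ->.
Qed.

Lemma trmxX n (M : 'M[R]_n) k : (M ^+ k)^T = M^T ^+ k.
Proof.
elim: k => [|k IH]; first by rewrite !expr0 trmx1.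
by rewrite exprS exprSr -!mulmxE trmx_mul IH.
Qed.

Lemma schur_stable_eigenvalue n (M : 'M[R]_n) (z : C) (v : 'rV[C]_n) :
  schur_stable M -> v != 0 -> v *m cmx M^T = z *: v -> normc z < 1.
Proof.
move=> M_stable v_neq0 v_eigen.
pose x := (map_mx Re v)^T; pose y := (map_mx Im v)^T.
have Mx : M *m x = Re z *: x - Im z *: y.
  by rewrite -[M]trmxK -trmx_mul -map_Re_mul_real v_eigen map_Re_scale linearB !linearZ.
have My : M *m y = Im z *: x + Re z *: y.
  by rewrite -[M]trmxK -trmx_mul -map_Im_mul_real v_eigen map_Im_scale linearD !linearZ.
have xy_neq0 : x != 0 \/ y != 0.
  apply/orP; rewrite -negb_and; move: v_neq0; apply: contraNN => /andP[/eqP x0 /eqP y0].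
  by apply/eqP/map_Re_Im_eq0; apply: trmx_inj; rewrite trmx0.
have := M_stable _ _ _ _ xy_neq0 Mx My.
by case: z {v_eigen Mx My} => a b /= ab_lt1; rewrite /Normc.normc -sqrtr1 ltr_sqrt.
Qed.

(* Cayley-Hamilton over R[i]: the product of (M^T - z) over the eigenvalues z vanishes. *)
Lemma schur_stable_expr_cvg0 n (M : 'M[R]_n) : schur_stable M ->
  forall i j, (fun k => (M ^+ k) i j) @ \oo --> 0.
Proof.
case: n M => [|n] M M_stable i j; first by case: i.
pose MC := cmx M^T.
have [rs char_rs] := closed_field_poly_normal (char_poly MC).
rewrite (monicP (char_poly_monic MC)) scale1r in char_rs.
have rs_lt1 : all (fun z => normc z < 1) rs.
  apply/allP => z z_rs.
  have : root (char_poly MC) z by rewrite char_rs root_prod_XsubC z_rs.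
  rewrite -eigenvalue_root_char => /eigenvalueP [v v_eigen v_neq0].
  exact: schur_stable_eigenvalue M_stable v_neq0 v_eigen.
have prod0 : 1 * \prod_(z <- rs) (MC - z%:M) = 0.
  rewrite mul1r -(Cayley_Hamilton MC) char_rs rmorph_prod; apply: eq_bigr => z _.
  by rewrite rmorphB /= horner_mx_X horner_mx_C.
have := mul_prod_subr_expr_cvg0 rs_lt1 prod0 j i.
under eq_fun do rewrite mul1r /MC -rmorphXn -trmxX !mxE normc_real.
exact: norm_cvg0.
Qed.

End SchurStability.

Section QuadraticForms.
Variable R : realType.

Definition vdot n (u v : 'cV[R]_n) : R := (u^T *m v) 0 0.
Definition qform n (M : 'M[R]_n) (v : 'cV[R]_n) : R := (v^T *m M *m v) 0 0.

Definition psd_le n (X Y : 'M[R]_n) := forall v, qform X v <= qform Y v.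

Lemma qformE n (M : 'M[R]_n) v : qform M v = vdot v (M *m v).
Proof. by rewrite /qform /vdot mulmxA. Qed.

Lemma vdotC n (u v : 'cV[R]_n) : vdot u v = vdot v u.
Proof. by rewrite /vdot -[v^T *m u]trmxK trmx_mul trmxK [_^T 0 0]mxE. Qed.

Lemma vdotDl n (u1 u2 v : 'cV[R]_n) : vdot (u1 + u2) v = vdot u1 v + vdot u2 v.
Proof. by rewrite /vdot linearD mulmxDl mxE. Qed.

Lemma vdotDr n (u v1 v2 : 'cV[R]_n) : vdot u (v1 + v2) = vdot u v1 + vdot u v2.
Proof. by rewrite /vdot mulmxDr mxE. Qed.

Lemma vdotBr n (u v1 v2 : 'cV[R]_n) : vdot u (v1 - v2) = vdot u v1 - vdot u v2.
Proof. by rewrite /vdot mulmxBr !mxE. Qed.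

Lemma vdotZl n (s : R) (u v : 'cV[R]_n) : vdot (s *: u) v = s * vdot u v.
Proof. by rewrite /vdot linearZ -scalemxAl mxE. Qed.

Lemma vdotZr n (s : R) (u v : 'cV[R]_n) : vdot u (s *: v) = s * vdot u v.
Proof. by rewrite /vdot -scalemxAr mxE. Qed.

Lemma vdot0l n (v : 'cV[R]_n) : vdot 0 v = 0.
Proof. by rewrite /vdot trmx0 mul0mx mxE. Qed.

Lemma vdot_mull n k (M : 'M[R]_(n, k)) u v : vdot (M *m u) v = vdot u (M^T *m v).
Proof. by rewrite /vdot trmx_mul mulmxA. Qed.

Lemma vdot_mulr n k (M : 'M[R]_(k, n)) u v : vdot u (M *m v) = vdot (M^T *m u) v.
Proof. by rewrite vdot_mull trmxK. Qed.

Lemma vdot_self_ge0 n (v : 'cV[R]_n) : 0 <= vdot v v.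
Proof. by rewrite /vdot mxE sumr_ge0 // => i _; rewrite mxE -expr2 sqr_ge0. Qed.

Lemma vdot_self_eq0 n (v : 'cV[R]_n) : vdot v v = 0 -> v = 0.
Proof.
rewrite /vdot mxE => /eqP; rewrite psumr_eq0 => [/allP v0|i _]; last first.
  by rewrite mxE -expr2 sqr_ge0.
apply/matrixP => i j; rewrite ord1 mxE.
by have := v0 i (mem_index_enum _); rewrite mxE -expr2 sqrf_eq0 => /eqP.
Qed.

Lemma qformD n (M1 M2 : 'M[R]_n) v : qform (M1 + M2) v = qform M1 v + qform M2 v.
Proof. by rewrite !qformE mulmxDl vdotDr. Qed.

Lemma qformB n (M1 M2 : 'M[R]_n) v : qform (M1 - M2) v = qform M1 v - qform M2 v.
Proof. by rewrite !qformE mulmxBl vdotBr. Qed.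

Lemma qform0 n (v : 'cV[R]_n) : qform 0 v = 0.
Proof. by rewrite /qform mulmx0 mul0mx mxE. Qed.

Lemma qformv0 n (M : 'M[R]_n) : qform M 0 = 0.
Proof. by rewrite qformE vdot0l. Qed.

Lemma qform_conj n k (U : 'M[R]_(k, n)) (M : 'M[R]_k) v :
  qform (U^T *m M *m U) v = qform M (U *m v).
Proof. by rewrite !qformE -!mulmxA vdot_mulr trmxK. Qed.

Lemma qform_sym_addv n (M : 'M[R]_n) u w : M^T = M ->
  qform M (u + w) = qform M u + qform M w + 2 * vdot u (M *m w).
Proof.
move=> M_sym; rewrite !qformE mulmxDr !vdotDl !vdotDr.
by rewrite [vdot w (M *m u)]vdot_mulr M_sym [vdot (M *m w) u]vdotC; ring.
Qed.

Lemma pd_qform_ge0 n (M : 'M[R]_n) v : pd M -> 0 <= qform M v.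
Proof.
move=> [_ M_pos]; have [->|v_neq0] := eqVneq v 0; first by rewrite qformv0.
exact/ltW/M_pos.
Qed.

Lemma pd_qform_eq0 n (M : 'M[R]_n) v : pd M -> qform M v = 0 -> v = 0.
Proof.
move=> [_ M_pos] Mv0; apply/eqP; apply: contraT => /M_pos.
by rewrite -/(qform M v) Mv0 ltxx.
Qed.

Lemma pd_unitmx n (M : 'M[R]_n) : pd M -> M \in unitmx.
Proof.
move=> [_ M_pos]; rewrite unitmxE unitfE; apply/negP => /det0P [v v_neq0 vM0].
have := M_pos v^T; rewrite trmx_eq0 => /(_ v_neq0).
by rewrite trmxK vM0 mul0mx mxE ltxx.
Qed.

Lemma psd0 n : psd (0 : 'M[R]_n).
Proof. by split=> [|v]; rewrite ?trmx0 // mulmx0 mul0mx mxE. Qed.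

Lemma psd_conj_add n k (U : 'M[R]_(k, n)) (M : 'M[R]_k) (P : 'M[R]_n) :
  psd M -> pd P -> pd (P + U^T *m M *m U).
Proof.
move=> [M_sym M_pos] [P_sym P_pos]; split.
  by rewrite linearD /= P_sym !trmx_mul trmxK M_sym mulmxA.
move=> v v_neq0; rewrite -/(qform _ v) qformD qform_conj.
by apply: lt_le_trans (P_pos v v_neq0) _; rewrite lerDl M_pos.
Qed.

Lemma qform_sym_lincomb n (Y : 'M[R]_n) s t u w : Y^T = Y ->
  qform Y (s *: u + t *: w) =
  s ^+ 2 * qform Y u + t ^+ 2 * qform Y w + 2 * s * t * vdot u (Y *m w).
Proof.
by move=> Y_sym; rewrite qform_sym_addv // !qformE -!scalemxAr !vdotZl !vdotZr; ring.
Qed.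

(* x and y are the real and imaginary parts of an eigenvector for the eigenvalue a + i b. *)
Lemma qform_eigen_pair n (Y M : 'M[R]_n) a b x y : Y^T = Y ->
  M *m x = a *: x - b *: y -> M *m y = b *: x + a *: y ->
  qform Y (M *m x) + qform Y (M *m y) = (a ^+ 2 + b ^+ 2) * (qform Y x + qform Y y).
Proof.
move=> Y_sym -> ->; rewrite -scaleNr !qform_sym_lincomb // sqrrN; ring.
Qed.

Lemma qform_gram n p (C : 'M[R]_(p, n)) v : qform (C^T *m C) v = vdot (C *m v) (C *m v).
Proof. by rewrite qformE -mulmxA vdot_mulr trmxK. Qed.

End QuadraticForms.

Section RiccatiOperator.
Variables (R : realType) (n m : nat) (A : 'M[R]_n) (B : 'M[R]_(n, m)).
Variables (Q : 'M[R]_n) (Rw : 'M[R]_m).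
Hypotheses (hQ : psd Q) (hR : pd Rw).

Definition ric_den (X : 'M[R]_n) := Rw + B^T *m X *m B.

Definition ric (X : 'M[R]_n) :=
  A^T *m X *m A - A^T *m X *m B *m invmx (ric_den X) *m B^T *m X *m A + Q.

Definition ric_gain (X : 'M[R]_n) := - (invmx (ric_den X) *m B^T *m X *m A).

(* Cost map of the fixed feedback u = K x; [ric] is its minimum over K. *)
Definition bellman (K : 'M[R]_(m, n)) (X : 'M[R]_n) :=
  (A + B *m K)^T *m X *m (A + B *m K) + Q + K^T *m Rw *m K.

Lemma dare_ric X : dare A B Q Rw X <-> X = ric X.
Proof. by []. Qed.

Lemma qform_bellman K X v :
  qform (bellman K X) v = qform X ((A + B *m K) *m v) + qform Q v + qform Rw (K *m v).
Proof. by rewrite /bellman !qformD !qform_conj. Qed.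

Lemma ric_den_pd X : psd X -> pd (ric_den X).
Proof. by move=> X_psd; apply: psd_conj_add. Qed.

Lemma ric_den_unitmx X : psd X -> ric_den X \in unitmx.
Proof. by move=> X_psd; apply/pd_unitmx/ric_den_pd. Qed.

(* Completion of squares in the input variable. *)
Lemma qform_bellman_ric K X v : psd X ->
  qform (bellman K X) v = qform (ric X) v + qform (ric_den X) ((K - ric_gain X) *m v).
Proof.
move=> X_psd; have [X_sym _] := X_psd; have [D_sym _] := ric_den_pd X_psd.
set D := ric_den X in D_sym *; set F := B^T *m X *m A.
set w := K *m v; set g := invmx D *m (F *m v).
have Dg : D *m g = F *m v by rewrite mulmxA mulmxV ?ric_den_unitmx // mul1mx.
have -> : (K - ric_gain X) *m v = w + g.
  by rewrite /ric_gain -/D mulmxBl mulNmx opprK /g /F !mulmxA.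
have -> : qform (ric X) v = qform X (A *m v) - vdot (F *m v) g + qform Q v.
  rewrite /ric -/D.
  have -> : A^T *m X *m B *m invmx D *m B^T *m X *m A = F^T *m invmx D *m F.
    by rewrite !trmx_mul trmxK X_sym !mulmxA.
  by rewrite qformD qformB !qform_conj [qform (invmx D) _]qformE.
have cross : vdot (A *m v) (X *m (B *m w)) = vdot w (F *m v).
  by rewrite vdotC mulmxA vdot_mull trmx_mul X_sym /F !mulmxA.
rewrite qform_bellman mulmxDl -mulmxA qform_sym_addv // cross.
rewrite qform_sym_addv // Dg {2}/D qformD qform_conj -/w.
rewrite [qform D g]qformE Dg [vdot g _]vdotC.
ring.
Qed.

Lemma ric_le_bellman K X v : psd X -> qform (ric X) v <= qform (bellman K X) v.
Proof.
move=> X_psd; rewrite (qform_bellman_ric K v X_psd) lerDl.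
exact/pd_qform_ge0/ric_den_pd.
Qed.

Lemma ric_bellman_gain X v : psd X -> qform (ric X) v = qform (bellman (ric_gain X) X) v.
Proof. by move=> X_psd; rewrite qform_bellman_ric // subrr mul0mx qformv0 addr0. Qed.

Lemma ric_psd X : psd X -> psd (ric X).
Proof.
move=> X_psd; have [X_sym _] := X_psd; have [D_sym _] := ric_den_pd X_psd.
split.
  rewrite /ric !linearD !linearN /= hQ.1 !trmx_mul !trmxK trmx_inv D_sym X_sym.
  by rewrite !mulmxA.
move=> v; rewrite -/(qform _ v) ric_bellman_gain // qform_bellman.
by rewrite !addr_ge0 ?X_psd.2 ?hQ.2 ?pd_qform_ge0.
Qed.

Lemma ric_mono X Y : psd X -> psd Y -> psd_le X Y -> psd_le (ric X) (ric Y).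
Proof.
move=> X_psd Y_psd leXY v; apply: le_trans (ric_le_bellman (ric_gain Y) v X_psd) _.
by rewrite ric_bellman_gain // !qform_bellman !lerD2r.
Qed.

End RiccatiOperator.

Section MatrixConvergence.
Variable R : realType.

Definition mxcvg p q (U : nat -> 'M[R]_(p, q)) (U0 : 'M[R]_(p, q)) :=
  forall i j, (fun k => U k i j) @ \oo --> U0 i j.

Lemma mxcvg_cst p q (U0 : 'M[R]_(p, q)) : mxcvg (fun=> U0) U0.
Proof. by move=> i j; apply: cvg_cst. Qed.

Lemma mxcvgD p q (U V : nat -> 'M[R]_(p, q)) U0 V0 :
  mxcvg U U0 -> mxcvg V V0 -> mxcvg (fun k => U k + V k) (U0 + V0).
Proof. by move=> U_cvg V_cvg i j; rewrite mxE; under eq_fun do rewrite mxE; apply: cvgD. Qed.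

Lemma mxcvgN p q (U : nat -> 'M[R]_(p, q)) U0 :
  mxcvg U U0 -> mxcvg (fun k => - U k) (- U0).
Proof. by move=> U_cvg i j; rewrite mxE; under eq_fun do rewrite mxE; apply: cvgN. Qed.

Lemma mxcvg_tr p q (U : nat -> 'M[R]_(p, q)) U0 :
  mxcvg U U0 -> mxcvg (fun k => (U k)^T) U0^T.
Proof. by move=> U_cvg i j; rewrite mxE; under eq_fun do rewrite mxE; apply: U_cvg. Qed.

Lemma mxcvgM p q r (U : nat -> 'M[R]_(p, q)) (V : nat -> 'M[R]_(q, r)) U0 V0 :
  mxcvg U U0 -> mxcvg V V0 -> mxcvg (fun k => U k *m V k) (U0 *m V0).
Proof.
move=> U_cvg V_cvg i j; rewrite mxE; under eq_fun do rewrite mxE.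
by apply: cvg_big => [|l _]; [apply: add_continuous | apply: cvgM].
Qed.

Lemma cvg_det p (U : nat -> 'M[R]_p) U0 :
  mxcvg U U0 -> (fun k => \det (U k)) @ \oo --> \det U0.
Proof.
move=> U_cvg; apply: cvg_big => [|s _]; first exact: add_continuous.
apply: cvgMl_tmp; apply: cvg_big => [|i _]; first exact: mul_continuous.
exact: U_cvg.
Qed.

Lemma mxcvg_adj p (U : nat -> 'M[R]_p) U0 :
  mxcvg U U0 -> mxcvg (fun k => \adj (U k)) (\adj U0).
Proof.
move=> U_cvg i j; rewrite mxE; under eq_fun do rewrite mxE.
apply: cvgMl_tmp; apply: cvg_det => a b; rewrite !mxE.
by under eq_fun do rewrite !mxE; apply: U_cvg.
Qed.

Lemma mxcvg_inv p (U : nat -> 'M[R]_p) U0 :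
  (forall k, U k \in unitmx) -> U0 \in unitmx ->
  mxcvg U U0 -> mxcvg (fun k => invmx (U k)) (invmx U0).
Proof.
move=> U_unit U0_unit U_cvg i j; rewrite /invmx U0_unit mxE.
under eq_fun do rewrite U_unit mxE.
apply: cvgM; last exact: mxcvg_adj.
by apply: cvgV; [rewrite -unitfE -unitmxE | apply: cvg_det].
Qed.

Lemma qform_cvg n (X : nat -> 'M[R]_n) X0 (v : nat -> 'cV[R]_n) v0 :
  mxcvg X X0 -> mxcvg v v0 -> (fun k => qform (X k) (v k)) @ \oo --> qform X0 v0.
Proof. by move=> X_cvg v_cvg; apply: (mxcvgM (mxcvgM (mxcvg_tr v_cvg) X_cvg) v_cvg). Qed.

End MatrixConvergence.

Arguments mxcvg_cst {R p q} U0.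

Section RiccatiContinuity.
Variables (R : realType) (n m : nat) (A : 'M[R]_n) (B : 'M[R]_(n, m)).
Variables (Q : 'M[R]_n) (Rw : 'M[R]_m).
Hypothesis hR : pd Rw.

Lemma mxcvg_ric (X : nat -> 'M[R]_n) X0 : (forall k, psd (X k)) -> psd X0 ->
  mxcvg X X0 -> mxcvg (fun k => ric A B Q Rw (X k)) (ric A B Q Rw X0).
Proof.
move=> X_psd X0_psd X_cvg.
have D_cvg : mxcvg (fun k => invmx (ric_den B Rw (X k))) (invmx (ric_den B Rw X0)).
  apply: mxcvg_inv => [k||]; rewrite ?ric_den_unitmx //.
  by apply: mxcvgD; repeat first [exact: X_cvg | exact: mxcvg_cst | apply: mxcvgM].
apply: mxcvgD; [apply: mxcvgD; [|apply: mxcvgN] | exact: mxcvg_cst];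
  by repeat first [exact: X_cvg | exact: D_cvg | exact: mxcvg_cst | apply: mxcvgM].
Qed.

End RiccatiContinuity.

Section PowerSums.
Variable R : realType.

Definition mx_abs_sum n (W : 'M[R]_n) := \sum_a \sum_b `|W a b|.

Lemma mx_abs_sum_ge0 n (W : 'M[R]_n) : 0 <= mx_abs_sum W.
Proof. by apply: sumr_ge0 => a _; apply: sumr_ge0. Qed.

Lemma sqr_entry_le_vdot n (w : 'cV[R]_n) a : w a 0 ^+ 2 <= vdot w w.
Proof.
rewrite /vdot mxE (bigD1 a) //= mxE -expr2 lerDl.
by apply: sumr_ge0 => i _; rewrite mxE -expr2 sqr_ge0.
Qed.

Lemma qform_le_abs_sum n (W : 'M[R]_n) w : qform W w <= mx_abs_sum W * vdot w w.
Proof.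
rewrite /qform mxE /mx_abs_sum; under eq_bigr do rewrite mxE mulr_suml.
rewrite exchange_big /= mulr_suml; apply: ler_sum => a _.
rewrite mulr_suml; apply: ler_sum => b _.
rewrite mxE; apply: le_trans (ler_norm _) _; rewrite !normrM.
have wa := sqr_entry_le_vdot w a; have wb := sqr_entry_le_vdot w b.
rewrite -[w a 0 ^+ 2]real_normK ?num_real // in wa.
rewrite -[w b 0 ^+ 2]real_normK ?num_real // in wb.
have pq_le : `|w a 0| * `|w b 0| <= vdot w w.
  have := normr_ge0 (w a 0); have := normr_ge0 (w b 0); nra.
by rewrite mulrAC [X in _ <= X]mulrC ler_wpM2r.
Qed.

Section Iterates.
Variables (n : nat) (M : 'M[R]_n).

(* Lyapunov function: L w = sum_(r < J) |M^r w|^2 decreases by at least |w|^2 / 2 along w -> M w. *)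
Lemma sum_vdot_iterates_le J :
  (forall w, vdot (M ^+ J *m w) (M ^+ J *m w) <= 2^-1 * vdot w w) ->
  forall v k, \sum_(j < k) vdot (M ^+ j *m v) (M ^+ j *m v)
              <= 2 * \sum_(r < J) vdot (M ^+ r *m v) (M ^+ r *m v).
Proof.
move=> MJ v k.
pose f w r := vdot (M ^+ r *m w) (M ^+ r *m w).
pose L w := \sum_(r < J) f w r.
have f0 w : f w 0%N = vdot w w by rewrite /f expr0 mul1mx.
have fS w r : f (M *m w) r = f w r.+1 by rewrite /f mulmxA -[M ^+ r *m M]/(M ^+ r * M) -exprSr.
have L_step w : vdot w w <= 2 * (L w - L (M *m w)).
  have LM : L (M *m w) = L w + f w J - f w 0%N.
    have shift : \sum_(r < J.+1) f w r = f w 0%N + \sum_(r < J) f w r.+1.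
      by rewrite big_ord_recl.
    rewrite big_ord_recr /= in shift.
    by rewrite /L; under eq_bigr do rewrite fS; rewrite -/(L w) shift; ring.
  by have := MJ w; rewrite LM f0 -/(f w J); lra.
have L_ge0 w : 0 <= L w by apply: sumr_ge0 => r _; apply: vdot_self_ge0.
suff : \sum_(j < k) f v j <= 2 * (L v - L (M ^+ k *m v)).
  by have := L_ge0 (M ^+ k *m v); rewrite -/(L v); lra.
elim: k => [|k IH]; first by rewrite big_ord0 expr0 mul1mx subrr mulr0.
rewrite big_ord_recr /=.
have := L_step (M ^+ k *m v); rewrite mulmxA -[M *m M ^+ k]/(M * M ^+ k) -exprS -/(f v k).
lra.
Qed.

Hypothesis M_cvg0 : forall i j, (fun k => (M ^+ k) i j) @ \oo --> 0.

Lemma expr_cvg0_half_contraction :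
  exists J, forall w, vdot (M ^+ J *m w) (M ^+ J *m w) <= 2^-1 * vdot w w.
Proof.
pose E k := (M ^+ k)^T *m M ^+ k.
have E_cvg0 : mxcvg E 0.
  have Mk_cvg0 : mxcvg (fun k => M ^+ k) 0 by move=> i j; rewrite mxE; apply: M_cvg0.
  by have := mxcvgM (mxcvg_tr Mk_cvg0) Mk_cvg0; rewrite trmx0 mul0mx.
have abs_E_cvg0 : (fun k => mx_abs_sum (E k)) @ \oo --> 0.
  have -> : 0 = mx_abs_sum (0 : 'M[R]_n).
    by rewrite /mx_abs_sum big1 // => a _; rewrite big1 // => b _; rewrite mxE normr0.
  apply: cvg_big => [|a _]; first exact: add_continuous.
  apply: cvg_big => [|b _]; first exact: add_continuous.
  exact: cvg_norm (E_cvg0 a b).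
have half_gt0 : 0 < 2^-1 :> R by rewrite invr_gt0.
have [J EJ] := proj1 (cvgn0P _) abs_E_cvg0 _ half_gt0.
exists J => w; have -> : vdot (M ^+ J *m w) (M ^+ J *m w) = qform (E J) w.
  by rewrite qformE /E -mulmxA [RHS]vdot_mulr trmxK.
apply: le_trans (qform_le_abs_sum _ _) _; rewrite ler_wpM2r ?vdot_self_ge0 //.
exact: le_trans (ler_norm _) (ltW (EJ J (leqnn J))).
Qed.

Lemma expr_cvg0_sum_vdot_bounded v :
  exists c, forall k, \sum_(j < k) vdot (M ^+ j *m v) (M ^+ j *m v) <= c.
Proof.
have [J MJ] := expr_cvg0_half_contraction.
by eexists => k; apply: sum_vdot_iterates_le MJ v k.
Qed.

End Iterates.

End PowerSums.

Section MonotoneConvergence.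
Variable R : realType.

Definition evec n (a : 'I_n) : 'cV[R]_n := delta_mx a 0.

Lemma vdot_evec n (X : 'M[R]_n) a b : vdot (evec a) (X *m evec b) = X a b.
Proof. by rewrite /vdot /evec trmx_delta -rowE -colE !mxE. Qed.

Lemma polarization n (X : 'M[R]_n) a b : X^T = X ->
  X a b = (qform X (evec a + evec b) - qform X (evec a) - qform X (evec b)) / 2.
Proof.
move=> X_sym; rewrite qform_sym_addv // vdot_evec.
have -> : forall qa qb : R, qa + qb + 2 * X a b - qa - qb = 2 * X a b by move=> *; ring.
by rewrite mulrC mulKf ?pnatr_eq0.
Qed.

Lemma psd_le_anti n (X Y : 'M[R]_n) : X^T = X -> Y^T = Y ->
  psd_le X Y -> psd_le Y X -> X = Y.
Proof.
move=> X_sym Y_sym leXY leYX.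
have XY v : qform X v = qform Y v by apply/le_anti; rewrite leXY leYX.
by apply/matrixP => a b; rewrite (polarization a b X_sym) (polarization a b Y_sym) !XY.
Qed.

Lemma psd_le_nondecreasing_cvg n (X : nat -> 'M[R]_n) :
  (forall k, (X k)^T = X k) -> (forall k, psd_le (X k) (X k.+1)) ->
  (forall v, exists c, forall k, qform (X k) v <= c) ->
  exists Xl, [/\ mxcvg X Xl, Xl^T = Xl & forall k, psd_le (X k) Xl].
Proof.
move=> X_sym X_mono X_bounded.
have X_homo v : {homo (fun k => qform (X k) v) : i j / (i <= j)%N >-> i <= j}.
  by apply/nondecreasing_seqP => k; apply: X_mono.
pose l v := sup (range (fun k => qform (X k) v)).
have l_cvg v : (fun k => qform (X k) v) @ \oo --> l v.
  apply: nondecreasing_cvgn (X_homo v) _.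
  by have [c c_ub] := X_bounded v; exists c => _ [k _ <-].
pose Xl := \matrix_(a, b) ((l (evec a + evec b) - l (evec a) - l (evec b)) / 2).
have X_cvg : mxcvg X Xl.
  move=> a b; rewrite mxE; under eq_fun do rewrite (polarization a b (X_sym _)).
  by apply: cvgMr_tmp; apply: cvgB; [apply: cvgB|]; apply: l_cvg.
exists Xl; split=> // [|k v].
  by apply/matrixP => a b; rewrite !mxE [evec b + _]addrC addrAC.
have Xk_cvg : (fun=> qform (X k) v) @ \oo --> qform (X k) v by apply: cvg_cst.
have Xv_cvg : (fun j => qform (X j) v) @ \oo --> qform Xl v.
  exact: qform_cvg X_cvg (mxcvg_cst v).
apply: ler_cvg_to Xk_cvg Xv_cvg _.
by exists k => // j /=; apply: X_homo.
Qed.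

End MonotoneConvergence.

Section ValueIteration.
Variables (R : realType) (n m : nat) (A : 'M[R]_n) (B : 'M[R]_(n, m)).
Variables (Q : 'M[R]_n) (Rw : 'M[R]_m).
Hypotheses (hQ : psd Q) (hR : pd Rw).

Local Notation ric := (ric A B Q Rw).

Definition value_iter k := iter k ric 0.

Lemma value_iterS k : value_iter k.+1 = ric (value_iter k).
Proof. by []. Qed.

Lemma value_iter_psd k : psd (value_iter k).
Proof. by elim: k => [|k IH]; [apply: psd0 | apply: ric_psd]. Qed.

Lemma value_iter_mono k : psd_le (value_iter k) (value_iter k.+1).
Proof.
elim: k => [|k IH] v; first by rewrite qform0; apply: (ric_psd A B hQ hR (psd0 R n)).2.
rewrite [value_iter k.+1]value_iterS [value_iter k.+2]value_iterS.
exact: (ric_mono A B Q hR (value_iter_psd k) (value_iter_psd k.+1) IH v).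
Qed.

(* The cost of any fixed feedback K dominates value iteration. *)
Lemma value_iter_bounded (K : 'M[R]_(m, n)) :
  (forall i j, (fun k => ((A + B *m K) ^+ k) i j) @ \oo --> 0) ->
  forall v, exists c, forall k, qform (value_iter k) v <= c.
Proof.
move=> MK_cvg0 v; set M := A + B *m K; set W := Q + K^T *m Rw *m K.
have value_le k w : qform (value_iter k) w <= \sum_(j < k) qform W (M ^+ j *m w).
  elim: k w => [|k IH] w; first by rewrite big_ord0 qform0.
  apply: le_trans (ric_le_bellman A B Q hR K w (value_iter_psd k)) _.
  rewrite qform_bellman big_ord_recl expr0 mul1mx /W qformD qform_conj.
  rewrite -addrA addrC lerD2l; apply: le_trans (IH _) _; apply: ler_sum => j _.
  by rewrite mulmxA -[M ^+ j *m M]/(M ^+ j * M) -exprSr.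
have [c c_ub] := expr_cvg0_sum_vdot_bounded MK_cvg0 v.
exists (mx_abs_sum W * c) => k; apply: le_trans (value_le k v) _.
apply: le_trans (ler_wpM2l (mx_abs_sum_ge0 W) (c_ub k)).
by rewrite mulr_sumr; apply: ler_sum => j _; apply: qform_le_abs_sum.
Qed.

Lemma value_iter_cvg : stabilizable A B ->
  exists Xl, [/\ mxcvg value_iter Xl, psd Xl, Xl = ric Xl
              & forall k, psd_le (value_iter k) Xl].
Proof.
move=> [K /schur_stable_expr_cvg0 MK_cvg0].
have [Xl [X_cvg Xl_sym X_le]] := psd_le_nondecreasing_cvg
  (fun k => (value_iter_psd k).1) value_iter_mono (value_iter_bounded MK_cvg0).
have Xl_psd : psd Xl.
  by split=> // v; apply: le_trans ((value_iter_psd 0).2 v) (X_le 0%N v).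
have ric_cvg : mxcvg (fun k => ric (value_iter k)) (ric Xl).
  exact: (mxcvg_ric hR value_iter_psd Xl_psd X_cvg).
exists Xl; split=> //; apply/matrixP => a b.
have XS_cvg : (fun k => value_iter k.+1 a b) @ \oo --> Xl a b.
  by have := X_cvg a b; rewrite -cvg_shiftS.
by rewrite -(norm_cvg_lim XS_cvg) -(norm_cvg_lim (ric_cvg a b)).
Qed.

End ValueIteration.

Lemma detectable_ker_eigen_lt1 (R : realType) n p (A : 'M[R]_n) (C : 'M[R]_(p, n))
  a b (x y : 'cV[R]_n) : detectable A C ->
  x != 0 \/ y != 0 -> C *m x = 0 -> C *m y = 0 ->
  A *m x = a *: x - b *: y -> A *m y = b *: x + a *: y -> a ^+ 2 + b ^+ 2 < 1.
Proof.
move=> [L L_stable] xy_neq0 Cx0 Cy0 Ax Ay.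
by apply: L_stable xy_neq0 _ _; rewrite mulmxDl -mulmxA ?Cx0 ?Cy0 mulmx0 addr0.
Qed.

Section RiccatiFixpoints.
Variables (R : realType) (n m p : nat) (A : 'M[R]_n) (B : 'M[R]_(n, m)).
Variables (Q : 'M[R]_n) (Rw : 'M[R]_m) (C : 'M[R]_(p, n)).
Hypotheses (hQ : psd Q) (hR : pd Rw) (hQC : Q = C^T *m C) (hAC : detectable A C).

Local Notation ric := (ric A B Q Rw).
Local Notation gain := (ric_gain A B Rw).

Lemma ric_fixpoint_qform Y z : psd Y -> Y = ric Y ->
  qform Y z = qform Y ((A + B *m gain Y) *m z) + qform Q z + qform Rw (gain Y *m z).
Proof. by move=> Y_psd Y_fix; rewrite -qform_bellman -ric_bellman_gain // -Y_fix. Qed.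

(* An unstable mode of the closed loop would carry no cost, hence be unobservable. *)
Lemma ric_fixpoint_stable Y : psd Y -> Y = ric Y -> schur_stable (A + B *m gain Y).
Proof.
move=> Y_psd Y_fix a b x y xy_neq0 Mx My; rewrite ltNge; apply/negP => ab_ge1.
set M := A + B *m gain Y in Mx My; set K := gain Y.
have energy := qform_eigen_pair Y_psd.1 Mx My.
have fix_x := ric_fixpoint_qform x Y_psd Y_fix; have fix_y := ric_fixpoint_qform y Y_psd Y_fix.
have YMx : 0 <= qform Y (M *m x) := Y_psd.2 _.
have YMy : 0 <= qform Y (M *m y) := Y_psd.2 _.
have Qx : 0 <= qform Q x := hQ.2 _.
have Qy : 0 <= qform Q y := hQ.2 _.
have Rx := pd_qform_ge0 (K *m x) hR; have Ry := pd_qform_ge0 (K *m y) hR.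
have Qx0 : qform Q x = 0 by nra.
have Qy0 : qform Q y = 0 by nra.
have Kx0 : K *m x = 0 by apply: pd_qform_eq0 hR _; nra.
have Ky0 : K *m y = 0 by apply: pd_qform_eq0 hR _; nra.
have Cx0 : C *m x = 0 by apply: vdot_self_eq0; rewrite -qform_gram -hQC.
have Cy0 : C *m y = 0 by apply: vdot_self_eq0; rewrite -qform_gram -hQC.
have Ax : A *m x = a *: x - b *: y by rewrite -Mx /M mulmxDl -mulmxA Kx0 mulmx0 addr0.
have Ay : A *m y = b *: x + a *: y by rewrite -My /M mulmxDl -mulmxA Ky0 mulmx0 addr0.
by have := detectable_ker_eigen_lt1 hAC xy_neq0 Cx0 Cy0 Ax Ay; rewrite ltNge ab_ge1.
Qed.

Lemma value_iter_le_fixpoint Y : psd Y -> Y = ric Y ->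
  forall k, psd_le (value_iter A B Q Rw k) Y.
Proof.
move=> Y_psd Y_fix; elim=> [|k IH] v; first by rewrite qform0; apply: Y_psd.2.
rewrite value_iterS [in qform Y v]Y_fix.
exact: (ric_mono A B Q hR (value_iter_psd A B hQ hR k) Y_psd IH v).
Qed.

(* The gap qform Y - qform X grows along the closed loop of X, which drives every state to 0. *)
Lemma fixpoint_le_stabilizing X Y : psd X -> X = ric X -> psd Y -> Y = ric Y ->
  schur_stable (A + B *m gain X) -> psd_le Y X.
Proof.
move=> X_psd X_fix Y_psd Y_fix /schur_stable_expr_cvg0 M_cvg0.
set M := A + B *m gain X in M_cvg0.
have gap_step v : qform Y v - qform X v <= qform Y (M *m v) - qform X (M *m v).
  have := ric_le_bellman A B Q hR (gain X) v Y_psd.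
  by rewrite -Y_fix qform_bellman (ric_fixpoint_qform v X_psd X_fix); lra.
have gap_iter k v : qform Y v - qform X v <= qform Y (M ^+ k *m v) - qform X (M ^+ k *m v).
  elim: k v => [|k IH] v; first by rewrite expr0 mul1mx.
  apply: le_trans (gap_step v) _; apply: le_trans (IH _) _.
  by rewrite mulmxA -[M ^+ k *m M]/(M ^+ k * M) -exprSr.
move=> v; rewrite -subr_le0.
have Mv_cvg0 : mxcvg (fun k => M ^+ k *m v) 0.
  have Mk_cvg0 : mxcvg (fun k => M ^+ k) 0 by move=> i j; rewrite mxE; apply: M_cvg0.
  by have := mxcvgM Mk_cvg0 (mxcvg_cst v); rewrite mul0mx.
have gap_cvg0 : (fun k => qform Y (M ^+ k *m v) - qform X (M ^+ k *m v)) @ \oo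
                --> qform Y 0 - qform X 0.
  by apply: cvgB; apply: qform_cvg Mv_cvg0; apply: mxcvg_cst.
rewrite !qformv0 subrr in gap_cvg0.
have gap_cst : (fun=> qform Y v - qform X v) @ \oo --> qform Y v - qform X v.
  by apply: cvg_cst.
by apply: ler_cvg_to gap_cst gap_cvg0 _; exists 0%N => // k _; apply: gap_iter.
Qed.

Lemma dare_value_iter_limit : stabilizable A B ->
  exists X, [/\ psd X, X = ric X, (forall Y, psd Y -> Y = ric Y -> Y = X)
              & mxcvg (value_iter A B Q Rw) X].
Proof.
move=> hAB; have [X [X_cvg X_psd X_fix X_ub]] := value_iter_cvg hQ hR hAB.
exists X; split=> // Y Y_psd Y_fix; apply: psd_le_anti Y_psd.1 X_psd.1 _ _.
  exact: fixpoint_le_stabilizing X_psd X_fix Y_psd Y_fix (ric_fixpoint_stable X_psd X_fix).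
move=> v; have Y_cvg : (fun=> qform Y v) @ \oo --> qform Y v by apply: cvg_cst.
apply: ler_cvg_to (qform_cvg X_cvg (mxcvg_cst v)) Y_cvg _.
by exists 0%N => // k _; apply: value_iter_le_fixpoint.
Qed.

End RiccatiFixpoints.

Section OffPolicyData.
Variables (R : realType) (n m : nat) (A : 'M[R]_n) (B : 'M[R]_(n, m)).
Variables (Q : 'M[R]_n) (Rw : 'M[R]_m).

Lemma Pstar_row_mx X : Pstar A B Q Rw X = Lambda Q Rw + (row_mx A B)^T *m X *m row_mx A B.
Proof. by rewrite /Pstar /Lambda tr_row_mx mul_col_mx mul_col_row add_block_mx !add0r. Qed.

Lemma schurP_Pstar X : X^T = X -> schurP (Pstar A B Q Rw X) = ric A B Q Rw X.
Proof.
move=> X_sym; rewrite /schurP /Pstar block_mxKul block_mxKur block_mxKdr /ric.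
by rewrite !trmx_mul !trmxK X_sym !mulmxA [Q + _]addrC addrAC.
Qed.

Lemma mxcvg_Pstar (X : nat -> 'M[R]_n) X0 :
  mxcvg X X0 -> mxcvg (fun k => Pstar A B Q Rw (X k)) (Pstar A B Q Rw X0).
Proof.
move=> X_cvg; rewrite Pstar_row_mx; under [fun k => _]funext => k do rewrite Pstar_row_mx.
by apply: mxcvgD; repeat first [exact: X_cvg | exact: mxcvg_cst | apply: mxcvgM].
Qed.

Variables (N : nat) (x : nat -> 'cV[R]_n) (u : nat -> 'cV[R]_m).
Hypothesis hdyn : forall k, (k < N)%N -> x k.+1 = A *m x k + B *m u k.

Lemma Hdata_dyn : Hdata N x u = Sdata N x u *m (row_mx A B)^T.
Proof.
rewrite /Hdata /Sdata -scalemxAl mulmx_suml; congr (_ *: _).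
apply: eq_bigr => k _; rewrite hdyn // /zdat.
by rewrite -[A *m x k + B *m u k](mul_row_col A B) trmx_mul mulmxA.
Qed.

Lemma data_recursion_value_iter (P : nat -> 'M[R]_(n + m)) :
  psd Q -> pd Rw -> pd (Sdata N x u) ->
  (forall k, Sdata N x u *m P k.+1 *m Sdata N x u =
     Sdata N x u *m Lambda Q Rw *m Sdata N x u
     + Hdata N x u *m schur_term P k *m (Hdata N x u)^T) ->
  forall k, P k.+1 = Pstar A B Q Rw (value_iter A B Q Rw k).
Proof.
move=> hQ hR S_pd P_rec.
have S_unit := pd_unitmx S_pd; set S := Sdata N x u in S_pd S_unit P_rec *.
have P_succ k : P k.+1 = Pstar A B Q Rw (schur_term P k).
  apply: (can_inj (mulmxK S_unit)); apply: (can_inj (mulKmx S_unit)).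
  rewrite mulmxA P_rec Hdata_dyn trmx_mul trmxK S_pd.1 Pstar_row_mx.
  by rewrite -/S mulmxDl mulmxDr !mulmxA.
elim=> [|k IH]; first by rewrite P_succ.
by rewrite P_succ /schur_term /= IH schurP_Pstar // (value_iter_psd A B hQ hR k).1.
Qed.

End OffPolicyData.

Unset Implicit Arguments.

Theorem proposition7 (R : realType) (n m p : nat)
  (A : 'M[R]_n) (B : 'M[R]_(n, m)) (Q : 'M[R]_n) (Rw : 'M[R]_m)
  (C : 'M[R]_(p, n))
  (hQ : psd Q) (hR : pd Rw) (hAB : stabilizable A B)
  (hQC : Q = C^T *m C) (hAC : detectable A C)
  (N : nat) (hN : (0 < N)%N)
  (x : nat -> 'cV[R]_n) (u : nat -> 'cV[R]_m)
  (hdyn : forall k, (k < N)%N -> x k.+1 = A *m x k + B *m u k)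
  (hS : pd (Sdata N x u))
  (P : nat -> 'M[R]_(n + m))
  (hP0 : P 0%N = 0)
  (hPsym : forall k, (P k.+1)^T = P k.+1)
  (hPrec : forall k,
     Sdata N x u *m P k.+1 *m Sdata N x u =
     Sdata N x u *m Lambda Q Rw *m Sdata N x u
     + Hdata N x u *m schur_term P k *m (Hdata N x u)^T) :
  exists X : 'M[R]_n,
    [/\ psd X, dare A B Q Rw X,
        (forall Y : 'M[R]_n, psd Y -> dare A B Q Rw Y -> Y = X) &
        forall i j : 'I_(n + m),
          (fun k : nat => P k i j : R) @ \oo --> (Pstar A B Q Rw X i j : R)].
Proof.
have [X [X_psd X_fix X_unique X_cvg]] := dare_value_iter_limit hQ hR hQC hAC hAB.
exists X; split.
- exact: X_psd.
- exact/dare_ric.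
- by move=> Y Y_psd /dare_ric; apply: X_unique.
- move=> i j; rewrite -cvg_shiftS.
  have -> : (fun k => P k.+1 i j) = (fun k => Pstar A B Q Rw (value_iter A B Q Rw k) i j).
    by apply: funext => k; rewrite (data_recursion_value_iter hdyn hQ hR hS hPrec).
  exact: mxcvg_Pstar X_cvg i j.
Qed.
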